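(* Let $G$ be a graph with $k=\chi(G)$ that has, up to permutation of the colours, exactly two proper $k$-colourings (i.e. exactly two partitions of $V(G)$ into $k$ independent sets). Then for every proper $k$-colouring $c$ of $G$ there exists a critical set for $(G,c)$ of cardinality $\chi(G)$.
   Context: All graphs are finite and simple. A proper $k$-colouring of $G=(V,E)$ is a map $c:V\to[k]$ with $c(u)\neq c(v)$ for every edge $uv$. A set $S\subseteq V$ is a determining set for $(G,c)$ if there is no proper $k$-colouring $c'\neq c$ of $G$ with $c'(s)=c(s)$ for all $s\in S$; a critical set for $(G,c)$ is an inclusion-minimal determining set. *)

From mathcomp Require Import all_boot.
Set Implicit Arguments. Unset Strict Implicit. Unset Printing Implicit Defensive.

Definition simple_graph (T : finType) (e : rel T) : Prop :=
  irreflexive e /\ symmetric e.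

Definition proper_colouring (T : finType) (e : rel T) (k : nat)
  (c : {ffun T -> 'I_k}) : Prop :=
  forall u v, e u v -> c u != c v.

Definition proper_colouringb (T : finType) (e : rel T) (k : nat)
  (c : {ffun T -> 'I_k}) : bool :=
  [forall u, forall v, e u v ==> (c u != c v)].

Definition is_chromatic_number (T : finType) (e : rel T) (k : nat) : Prop :=
  (exists c : {ffun T -> 'I_k}, proper_colouring e c) /\
  (forall j, j < k -> forall c : {ffun T -> 'I_j}, ~ proper_colouring e c).

Definition colour_partition (T : finType) (k : nat) (c : {ffun T -> 'I_k})
  : {set {set T}} :=
  [set [set x | c x == i] | i : 'I_k] :\ set0.

(* the set of partitions of V coming from proper k-colourings,
   i.e. the proper k-colourings up to permutation of colours *)
Definition colouring_partitions (T : finType) (e : rel T) (k : nat)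
  : {set {set {set T}}} :=
  [set colour_partition c | c in [pred c : {ffun T -> 'I_k} | proper_colouringb e c]].

Definition determining (T : finType) (e : rel T) (k : nat)
  (c : {ffun T -> 'I_k}) (S : {set T}) : Prop :=
  forall c' : {ffun T -> 'I_k}, proper_colouring e c' ->
    (forall s, s \in S -> c' s = c s) -> c' = c.

Definition critical (T : finType) (e : rel T) (k : nat)
  (c : {ffun T -> 'I_k}) (S : {set T}) : Prop :=
  determining e c S /\ (forall S' : {set T}, S' \proper S -> ~ determining e c S').

From mathcomp Require Import all_boot zify fingroup perm.
Set Implicit Arguments. Unset Strict Implicit. Unset Printing Implicit Defensive.

(* Let c2 induce the second colour partition. As k = chi(G), the relation
   "class i of c2 meets class j of c" satisfies Hall's condition: if a set Y of
   c-colours met fewer than #|Y| classes of c2, recolouring the vertices with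
   c-colour in Y by c2 would properly colour G with fewer than k colours.
   Renaming the colours of c2 along the resulting matching gives c' with the
   same partition and vertices t j with c (t j) = c' (t j) = j for every j.
   Pick b with c' b != c b and let S = {b} + {t j | j != c' b}. A colouring that
   agrees with c on S either induces the partition of c, and then the t j force
   it to be c, or that of c', which is impossible as it gives t (c b) and b the
   same colour. Without b, c' extends c on S; without t j, so does c or c' with
   the colours j and c' b swapped. *)

Section HallMarriage.

Variables (A B : finType) (a0 : A).
Implicit Types (R : A -> B -> bool) (X : {set A}) (Bs Y Z : {set B}).

Definition neighbours R Y : {set A} := [set a | [exists y in Y, R a y]].

Definition hall_condition R Bs :=
  forall Y, Y \subset Bs -> #|Y| <= #|neighbours R Y|.

Definition matching R Bs (f : B -> A) :=
  {in Bs &, injective f} /\ {in Bs, forall b, R (f b) b}.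

Definition avoiding R X a b := R a b && (a \notin X).

Lemma neighboursU R Y Z : neighbours R (Y :|: Z) = neighbours R Y :|: neighbours R Z.
Proof.
apply/setP=> a; rewrite !inE; apply/existsP/orP => [[y /andP[]]|].
  rewrite inE => /orP[] yYZ Ray; [left|right];
    by apply/existsP; exists y; rewrite yYZ.
by case=> /existsP[y /andP[yYZ Ray]]; exists y; rewrite inE yYZ ?orbT.
Qed.

Lemma neighbours_avoiding R X Y : neighbours R Y :\: X = neighbours (avoiding R X) Y.
Proof.
apply/setP=> a; rewrite !inE; apply/andP/existsP => [[aX /existsP[y /andP[yY Ray]]]|[y]].
  by exists y; rewrite yY /avoiding Ray.
by rewrite /avoiding => /and3P[yY Ray aX]; split=> //; apply/existsP; exists y; rewrite yY.
Qed.

Lemma card_neighboursU_avoiding R X Y :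
  #|neighbours R Y :|: X| = #|neighbours (avoiding R X) Y| + #|X|.
Proof.
rewrite -neighbours_avoiding cardsU cardsD.
have := subset_leq_card (subsetIl (neighbours R Y) X); lia.
Qed.

Lemma matching_glue R Bs Y X f1 f2 :
  Y \subset Bs -> matching R Y f1 -> {in Y, forall b, f1 b \in X} ->
  matching (avoiding R X) (Bs :\: Y) f2 ->
  matching R Bs (fun b => if b \in Y then f1 b else f2 b).
Proof.
move=> sYBs [inj1 R1] f1X [inj2 R2].
have f2X b : b \in Bs -> b \notin Y -> f2 b \notin X.
  by move=> bBs bY; have /andP[] : avoiding R X (f2 b) b by apply: R2; rewrite inE bY.
split=> [x y xBs yBs|b bBs].
  case: ifP => xY; case: ifP => yY.
  - exact: inj1.
  - by move=> fxy; have := f2X y yBs (negbT yY); rewrite -fxy f1X.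
  - by move=> fxy; have := f2X x xBs (negbT xY); rewrite fxy f1X.
  - by apply: inj2; rewrite inE ?xY ?yY.
case: ifP => bY; first exact: R1.
by have /andP[] : avoiding R X (f2 b) b by apply: R2; rewrite inE bY.
Qed.

Lemma hall_condition_tight R Bs Y :
  hall_condition R Bs -> Y \subset Bs -> #|neighbours R Y| <= #|Y| ->
  hall_condition (avoiding R (neighbours R Y)) (Bs :\: Y).
Proof.
move=> hallR sYBs tightY Z sZ.
have sZBs : Z \subset Bs := subset_trans sZ (subsetDl _ _).
have disjZY : Z :&: Y = set0.
  by apply/setP=> y; rewrite !inE; apply/andP=> -[/(subsetP sZ)]; rewrite inE => /andP[/negP].
have := hallR (Z :|: Y); rewrite subUset sZBs sYBs cardsU disjZY cards0 subn0 => /(_ isT).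
rewrite neighboursU card_neighboursU_avoiding; lia.
Qed.

Lemma hall_condition_loose R Bs b0 a1 :
  b0 \in Bs ->
  (forall Y, Y \subset Bs -> Y != set0 -> Y != Bs -> #|Y| < #|neighbours R Y|) ->
  hall_condition (avoiding R [set a1]) (Bs :\ b0).
Proof.
move=> b0Bs looseR Z sZ; have [->|nZ] := eqVneq Z set0; first by rewrite cards0.
have sZBs : Z \subset Bs := subset_trans sZ (subsetDl _ _).
have ZBs : Z != Bs.
  by apply/eqP=> ZBs; have := subsetP sZ b0; rewrite ZBs b0Bs !inE eqxx => /(_ isT).
have := looseR Z sZBs nZ ZBs; have := card_neighboursU_avoiding R [set a1] Z.
have := subset_leq_card (subsetUl (neighbours R Z) [set a1]); rewrite cards1; lia.
Qed.

Lemma matching_set0 R : matching R set0 (fun=> a0).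
Proof. by split=> [x|x]; rewrite inE. Qed.

Lemma matching_set1 R b0 a1 : R a1 b0 -> matching R [set b0] (fun=> a1).
Proof. by move=> Ra1; split=> [x y /set1P-> /set1P->|b /set1P->]. Qed.

Theorem hall_marriage R Bs : hall_condition R Bs -> exists f, matching R Bs f.
Proof.
move: {2}#|Bs| (leqnn #|Bs|) => n; elim: n R Bs => [|n IHn] R Bs.
  by rewrite leqn0 cards_eq0 => /eqP-> _; exists (fun=> a0); apply: matching_set0.
move=> leBs hallR.
have [->|[b0 b0Bs]] := set_0Vmem Bs; first by exists (fun=> a0); apply: matching_set0.
case: (boolP [exists Y : {set B},
              [&& Y \subset Bs, Y != set0, Y != Bs & #|neighbours R Y| <= #|Y|]]).
  case/existsP=> Y /and4P[sYBs nY YBs tightY].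
  have ltYBs : #|Y| < #|Bs| by rewrite proper_card // properEneq YBs.
  have hallY Z : Z \subset Y -> #|Z| <= #|neighbours R Z|.
    by move=> sZY; apply/hallR/(subset_trans sZY).
  have [f1 mf1] := IHn R Y (leq_trans ltYBs leBs) hallY.
  have [|f2 mf2] := IHn _ (Bs :\: Y) _ (hall_condition_tight hallR sYBs tightY).
    by rewrite cardsD (setIidPr sYBs); move: nY; rewrite -card_gt0; lia.
  have f1N b : b \in Y -> f1 b \in neighbours R Y.
    by move=> bY; rewrite inE; apply/existsP; exists b; rewrite bY mf1.2.
  by exists (fun b => if b \in Y then f1 b else f2 b); apply: matching_glue mf2.
move/existsPn=> notTight.
have looseR Y : Y \subset Bs -> Y != set0 -> Y != Bs -> #|Y| < #|neighbours R Y|.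
  by move=> sYBs nY YBs; have := notTight Y; rewrite sYBs nY YBs ltnNge.
have := hallR [set b0]; rewrite sub1set b0Bs cards1 card_gt0 => /(_ isT)/set0Pn[a1].
rewrite inE => /existsP[_ /andP[/set1P-> Ra1]].
have [|f2 mf2] := IHn _ (Bs :\ b0) _ (hall_condition_loose a1 b0Bs looseR).
  by rewrite (cardsD1 b0 Bs) b0Bs in leBs.
exists (fun b => if b \in [set b0] then a1 else f2 b).
apply: matching_glue (matching_set1 Ra1) _ mf2; first by rewrite sub1set.
by move=> b _; rewrite inE.
Qed.

End HallMarriage.

Section Colourings.

Variables (T : finType) (e : rel T) (k : nat).
Implicit Types (c d : {ffun T -> 'I_k}) (S : {set T}).

Lemma proper_colouringP c : reflect (proper_colouring e c) (proper_colouringb e c).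
Proof.
apply: (iffP forallP) => [cP u v | cP u]; first by move/forallP/(_ v)/implyP: (cP u).
by apply/forallP=> v; apply/implyP/cP.
Qed.

Lemma proper_colouring_comp c (g : 'I_k -> 'I_k) :
  injective g -> proper_colouring e c -> proper_colouring e [ffun x => g (c x)].
Proof. by move=> g_inj cP u v /cP; rewrite !ffunE (inj_eq g_inj). Qed.

Lemma colour_partition_comp c (g : 'I_k -> 'I_k) :
  injective g -> colour_partition [ffun x => g (c x)] = colour_partition c.
Proof.
move=> g_inj; congr (_ :\ _); apply/setP=> C; apply/imsetP/imsetP => -[i _ ->].
  exists (invF g_inj i) => //; apply/setP=> x.
  by rewrite !inE ffunE -{1}(f_invF g_inj i) (inj_eq g_inj).
by exists (g i) => //; apply/setP=> x; rewrite !inE ffunE (inj_eq g_inj).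
Qed.

Lemma colour_partition_eq_ker c d :
  colour_partition c = colour_partition d -> forall x y, (c x == c y) = (d x == d y).
Proof.
move=> cd x y.
have : [set z | c z == c x] \in colour_partition d.
  rewrite -cd !inE imset_f // andbT; apply/set0Pn; exists x; by rewrite inE.
rewrite !inE => /andP[_ /imsetP[i _ /setP classx]].
have := classx x; have := classx y; rewrite !inE eqxx eq_sym => -> /esym/eqP->.
by rewrite eq_sym.
Qed.

Lemma chromatic_leq_card_image (X : finType) (d : T -> X) :
  is_chromatic_number e k -> (forall u v, e u v -> d u != d v) -> k <= #|d @: T|.
Proof.
move=> [_ chi] dP; rewrite leqNgt; apply/negP => lt_im_k.
have dT x : d x \in d @: T by rewrite imset_f.
apply: (chi _ lt_im_k [ffun x => enum_rank_in (dT x) (d x)]) => u v /dP.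
by apply: contra; rewrite !ffunE => /eqP/(congr1 enum_val); rewrite !enum_rankK_in // => ->.
Qed.

Definition colour_overlap (c2 c : {ffun T -> 'I_k}) (i j : 'I_k) : bool :=
  [exists x, (c2 x == i) && (c x == j)].

Lemma hall_condition_colour_overlap c c2 :
  is_chromatic_number e k -> proper_colouring e c -> proper_colouring e c2 ->
  hall_condition (colour_overlap c2 c) setT.
Proof.
move=> chi cP c2P Y _; rewrite leqNgt; apply/negP => ltNY.
pose d x := if c x \in Y then inl (c2 x) else @inr 'I_k 'I_k (c x).
have dP u v : e u v -> d u != d v.
  by move=> euv; rewrite /d; do 2!case: ifP => _ //=; [apply: c2P | apply: cP].
have sub : d @: T \subset inl @: neighbours (colour_overlap c2 c) Y :|: inr @: ~: Y.
  apply/subsetP=> _ /imsetP[x _ ->]; rewrite /d inE; case: ifP => xY.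
    rewrite imset_f // inE; apply/existsP; exists (c x); rewrite xY.
    by apply/existsP; exists x; rewrite !eqxx.
  by rewrite orbC imset_f // inE xY.
have := leq_trans (chromatic_leq_card_image chi dP) (subset_leq_card sub).
rewrite cardsU (card_imset _ inl_inj) (card_imset _ inr_inj).
have := cardsC Y; rewrite card_ord; move: ltNY; lia.
Qed.

Lemma exists_second_colouring c :
  #|colouring_partitions e k| = 2 -> proper_colouring e c ->
  exists c2, [/\ proper_colouring e c2, colour_partition c2 != colour_partition c &
    forall d, proper_colouring e d ->
      colour_partition d = colour_partition c \/ colour_partition d = colour_partition c2].
Proof.
have partsP d : proper_colouring e d -> colour_partition d \in colouring_partitions e k.
  by move=> dP; apply: imset_f; rewrite inE; apply/proper_colouringP.
move=> two_parts cP; have : #|colouring_partitions e k :\ colour_partition c| == 1.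
  have := cardsD1 (colour_partition c) (colouring_partitions e k).
  by rewrite partsP // two_parts => -[->].
case/cards1P=> P2 other.
have : P2 \in colouring_partitions e k :\ colour_partition c by rewrite other set11.
rewrite in_setD1 => /andP[P2c /imsetP[c2 c2P P2E]]; subst P2.
exists c2; split=> //; first by apply/proper_colouringP; rewrite inE in c2P.
move=> d dP; have [|dc] := eqVneq (colour_partition d) (colour_partition c); first by left.
by right; apply/set1P; rewrite -other in_setD1 dc partsP.
Qed.

Lemma exists_common_transversal c c2 :
  0 < k -> is_chromatic_number e k -> proper_colouring e c -> proper_colouring e c2 ->
  exists c' (t : 'I_k -> T),
    [/\ proper_colouring e c', colour_partition c' = colour_partition c2,
        forall j, c (t j) = j & forall j, c' (t j) = j].
Proof.
move=> k_gt0 chi cP c2P.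
have hall := hall_condition_colour_overlap chi cP c2P.
have [f [f_inj f_overlap]] := hall_marriage (Ordinal k_gt0) hall.
have {}f_inj : injective f by move=> i j; apply: f_inj; rewrite inE.
have overlap j : exists x, (c2 x == f j) && (c x == j).
  by apply/existsP/f_overlap; rewrite inE.
pose t j := xchoose (overlap j).
have tP j : c2 (t j) = f j /\ c (t j) = j by have /andP[/eqP-> /eqP->] := xchooseP (overlap j).
have invf_inj : injective (invF f_inj) := can_inj (f_invF f_inj).
exists [ffun x => invF f_inj (c2 x)], t; split.
- exact: proper_colouring_comp.
- exact: colour_partition_comp.
- by move=> j; rewrite (tP j).2.
- by move=> j; rewrite ffunE (tP j).1 invF_f.
Qed.

Lemma determiningS c (S1 S2 : {set T}) :
  S1 \subset S2 -> determining e c S1 -> determining e c S2.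
Proof. by move=> sS12 detS1 d dP dS2; apply: detS1 => // s /(subsetP sS12)/dS2. Qed.

Lemma critical_of_minimal c S :
  determining e c S -> (forall w, w \in S -> ~ determining e c (S :\ w)) -> critical e c S.
Proof.
move=> detS minS; split=> // S' /properP[sS'S [w wS wS']].
apply: contra_not (minS w wS); apply: determiningS.
by apply/subsetP=> s sS'; rewrite !inE (subsetP sS'S) // andbT; apply: contraNneq wS' => <-.
Qed.

Section CriticalSet.

Variables (c c' : {ffun T -> 'I_k}) (t : 'I_k -> T) (b : T).
Hypotheses (cP : proper_colouring e c) (c'P : proper_colouring e c').
Hypotheses (c_t : forall j, c (t j) = j) (c'_t : forall j, c' (t j) = j).
Hypothesis c'b_neq : c' b != c b.
Hypothesis two_partitions : forall d, proper_colouring e d ->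
  colour_partition d = colour_partition c \/ colour_partition d = colour_partition c'.

Definition crit_set : {set T} := b |: t @: [set~ c' b].

Lemma crit_setP s : reflect (s = b \/ exists2 j, j != c' b & s = t j) (s \in crit_set).
Proof.
rewrite !inE; apply: (iffP orP) => [[/eqP->|/imsetP[j]]|[->|[j jl ->]]].
- by left.
- by move=> jl ->; right; exists j; rewrite -?in_setC1.
- by rewrite eqxx; left.
- by right; apply/imsetP; exists j; rewrite ?inE.
Qed.

Lemma card_crit_set : #|crit_set| = k.
Proof.
have b_notin_t : b \notin t @: [set~ c' b].
  by apply/imsetP=> -[j _ bt]; move: c'b_neq; rewrite bt c_t c'_t eqxx.
rewrite cardsU1 b_notin_t (card_imset _ (can_inj c_t)) cardsC1 card_ord.
have := ltn_ord (c' b); lia.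
Qed.

Lemma eq_colouring_of_ker d :
  (forall x y, (d x == d y) = (c x == c y)) ->
  (forall j, j != c' b -> d (t j) = j) -> d = c.
Proof.
move=> dker d_t; apply/ffunP=> x; have [cxl|cxl] := eqVneq (c x) (c' b).
  apply/eqP; rewrite cxl; apply: contraT => dxl.
  have := dker x (t (d x)); rewrite d_t // c_t eqxx cxl => /esym/eqP lE.
  by rewrite lE eqxx in dxl.
by have := dker x (t (c x)); rewrite d_t // !c_t !eqxx => /eqP.
Qed.

Lemma determining_crit_set : determining e c crit_set.
Proof.
move=> d dP d_c.
have d_t j : j != c' b -> d (t j) = j.
  by move=> jl; rewrite d_c ?c_t //; apply/crit_setP; right; exists j.
have bS : b \in crit_set by apply/crit_setP; left.
case: (two_partitions dP) => /colour_partition_eq_ker dker; first exact: eq_colouring_of_ker.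
have cbl : c b != c' b by rewrite eq_sym.
by have := dker (t (c b)) b; rewrite d_t // d_c // c'_t eqxx (negbTE cbl).
Qed.

Lemma not_determining_crit_setD1_transversal j d :
  j != c' b -> proper_colouring e d -> (forall m, d (t m) = m) ->
  tperm j (c' b) (d b) = c b -> ~ determining e c (crit_set :\ t j).
Proof.
move=> jl dP d_t db det.
have : [ffun x => tperm j (c' b) (d x)] = c.
  apply: det; first exact: proper_colouring_comp (@perm_inj _ _) dP.
  move=> s; rewrite in_setD1 => /andP[stj /crit_setP[->|[m ml sm]]]; rewrite ffunE // sm.
  rewrite d_t c_t tpermD // 1?eq_sym //.
  by apply: contraNneq stj => jm; rewrite sm jm.
move/ffunP/(_ (t j)); rewrite ffunE d_t tpermL c_t => /eqP; by rewrite eq_sym (negbTE jl).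
Qed.

Lemma not_determining_crit_setD1 w : w \in crit_set -> ~ determining e c (crit_set :\ w).
Proof.
case/crit_setP=> [->|[j jl ->]].
  move=> det; move: c'b_neq; rewrite (det c' c'P) ?eqxx // => s.
  rewrite in_setD1 => /andP[sb /crit_setP[sb'|[m _ ->]]]; last by rewrite c_t c'_t.
  by rewrite sb' eqxx in sb.
have [->|jcb] := eqVneq j (c b).
  by apply: not_determining_crit_setD1_transversal c'P c'_t _; rewrite ?tpermR // eq_sym.
by apply: not_determining_crit_setD1_transversal cP c_t _; rewrite ?tpermD.
Qed.

Lemma critical_crit_set : critical e c crit_set.
Proof. exact: critical_of_minimal determining_crit_set not_determining_crit_setD1. Qed.

End CriticalSet.

End Colourings.

Theorem proposition8 (T : finType) (e : rel T) (k : nat) :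
  simple_graph e ->
  is_chromatic_number e k ->
  #|colouring_partitions e k| = 2 ->
  forall c : {ffun T -> 'I_k}, proper_colouring e c ->
    exists S : {set T}, critical e c S /\ #|S| = k.
Proof.
move=> _ chi two_parts c cP.
have [c2 [c2P c2_neq two]] := exists_second_colouring two_parts cP.
have k_gt0 : 0 < k.
  case: (pickP (@predT T)) => [x _|T0].
    exact: leq_ltn_trans (leq0n (c x)) (ltn_ord (c x)).
  by case/eqP: c2_neq; congr colour_partition; apply/ffunP=> x; have := T0 x.
have [c' [t [c'P c'c2 c_t c'_t]]] := exists_common_transversal k_gt0 chi cP c2P.
have [b c'b] : exists b, c' b != c b.
  apply/existsP; apply: contraNT c2_neq => /existsPn c'c; rewrite -c'c2.
  by apply/eqP; congr colour_partition; apply/ffunP=> x; apply/eqP/negPn/c'c.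
exists (crit_set c' t b); split; last exact: card_crit_set c_t c'_t c'b.
by apply: critical_crit_set cP c'P c_t c'_t c'b _; rewrite c'c2.
Qed.
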